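(* Let $G$ be a simplicial group and $M$ an abelian $\pi_0(G)$-module. The map $C^1(\pi_0(G),M)\to C^1(G,M)$, $c\mapsto (g_0\mapsto c(g_0B_0NG))$, restricts to an isomorphism $Z^1(\pi_0(G),M)\to Z^1(G,M)$, which in turn restricts to an isomorphism $B^1(\pi_0(G),M)\to B^1(G,M)$. In particular $H^1(G,M)\cong H^1(\pi_0(G),M)$.
   Context: Simplicial group $G$ (faces $d_k$), $N_1G=\ker d_1\subseteq G_1$, $B_0NG=d_0(N_1G)$, $\pi_0(G)=G_0/B_0NG$. Cochain complex of $G$: $C^n(G,M)=\mathrm{Map}(G_{n-1}\times\cdots\times G_0,M)$; in low degrees $C^0=M$, $C^1=\mathrm{Map}(G_0,M)$, $C^2=\mathrm{Map}(G_1\times G_0,M)$, $(dc)(g_0)=c-\langle g_0\rangle\cdot c$ for $c\in C^0$, and $(dc)(g_1,g_0)=c(d_0g_1)-c((d_1g_1)g_0)+\langle g_1\rangle\cdot c(g_0)$ for $c\in C^1$, where $\langle g\rangle$ is the class in $\pi_0(G)$ of $g$ (resp. of $d_1g$). For a group $\Pi$: $C^1(\Pi,M)=\mathrm{Map}(\Pi,M)$, $(dc)(h,g)=c(h)-c(hg)+h\cdot c(g)$, $(dc)(g)=c-g\cdot c$ on $C^0=M$; $Z^1,B^1,H^1$ as usual. *)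

(* M is a zmodType; groups (possibly infinite) are given by an
   explicit record, since MathComp only has finite groups. *)
From HB Require Import structures.
From mathcomp Require Import all_boot all_order all_algebra.
Set Implicit Arguments. Unset Strict Implicit. Unset Printing Implicit Defensive.
Import GRing.Theory.
Local Open Scope ring_scope.

Record grp := Grp {
  gcar :> Type;
  gmul : gcar -> gcar -> gcar;
  gone : gcar;
  ginv : gcar -> gcar;
  gmulA : forall x y z, gmul x (gmul y z) = gmul (gmul x y) z;
  gmul1 : forall x, gmul gone x = x;
  gmulV : forall x, gmul (ginv x) x = gone }.

Arguments gmul {g}.
Arguments gone {g}.
Arguments ginv {g}.

Definition is_hom (A B : grp) (f : A -> B) : Prop :=
  forall x y, f (gmul x y) = gmul (f x) (f y).

Record sgrp := SGrp {
  sG : nat -> grp;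
  face : forall n, nat -> sG n.+1 -> sG n;
  degen : forall n, nat -> sG n -> sG n.+1;
  face_hom : forall n i, (i <= n.+1)%N -> is_hom (@face n i);
  degen_hom : forall n j, (j <= n)%N -> is_hom (@degen n j);
  dd : forall n i j (x : sG n.+2), (i < j)%N -> (j <= n.+2)%N ->
         face i (face j x) = face j.-1 (face i x);
  ds_lt : forall n i j (x : sG n.+1), (i < j)%N -> (j <= n.+1)%N ->
         face i (degen j x) = degen j.-1 (face i x);
  ds_eq : forall n j (x : sG n), (j <= n)%N -> face j (degen j x) = x;
  ds_eq1 : forall n j (x : sG n), (j <= n)%N -> face j.+1 (degen j x) = x;
  ds_gt : forall n i j (x : sG n.+1), (j.+1 < i)%N -> (i <= n.+2)%N ->
         face i (degen j x) = degen j (face i.-1 x);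
  ss : forall n i j (x : sG n), (i <= j)%N -> (j <= n)%N ->
         degen i (degen j x) = degen j.+1 (degen i x) }.

Definition B0NG (G : sgrp) (g : sG G 0) : Prop :=
  exists n : sG G 1, face 1 n = gone /\ face 0 n = g.

(* (P, p) is pi_0(G) = G_0 / B_0NG: p is a surjective homomorphism whose
   kernel is exactly B_0NG (a quotient of G_0 by B_0NG, up to unique iso). *)
Definition is_pi0 (G : sgrp) (P : grp) (p : sG G 0 -> P) : Prop :=
  [/\ is_hom p, (forall x : P, exists g, p g = x)
    & (forall g, p g = gone <-> B0NG g)].

Definition is_module (P : grp) (M : zmodType) (act : P -> M -> M) : Prop :=
  [/\ (forall m, act gone m = m),
      (forall x y m, act (gmul x y) m = act x (act y m))
    & (forall x m1 m2, act x (m1 + m2) = act x m1 + act x m2)].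

Definition grp_d1 (P : grp) (M : zmodType) (act : P -> M -> M) (c : P -> M)
  (h g : P) : M := c h - c (gmul h g) + act h (c g).
Definition grp_Z1 (P : grp) (M : zmodType) (act : P -> M -> M) (c : P -> M) : Prop :=
  forall h g, grp_d1 act c h g = 0.
Definition grp_B1 (P : grp) (M : zmodType) (act : P -> M -> M) (c : P -> M) : Prop :=
  exists m : M, forall g, c g = m - act g m.

(* Cochains of the simplicial group G, with <g> = p g for g in G_0 and
   <g1> = p (d_1 g1) for g1 in G_1. *)
Definition sgrp_d1 (G : sgrp) (P : grp) (p : sG G 0 -> P) (M : zmodType)
  (act : P -> M -> M) (c : sG G 0 -> M) (g1 : sG G 1) (g0 : sG G 0) : M :=
  c (face 0 g1) - c (gmul (face 1 g1) g0) + act (p (face 1 g1)) (c g0).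
Definition sgrp_Z1 (G : sgrp) (P : grp) (p : sG G 0 -> P) (M : zmodType)
  (act : P -> M -> M) (c : sG G 0 -> M) : Prop :=
  forall g1 g0, sgrp_d1 p act c g1 g0 = 0.
Definition sgrp_B1 (G : sgrp) (P : grp) (p : sG G 0 -> P) (M : zmodType)
  (act : P -> M -> M) (c : sG G 0 -> M) : Prop :=
  exists m : M, forall g0, c g0 = m - act (p g0) m.

Definition infl (G : sgrp) (P : grp) (p : sG G 0 -> P) (M : zmodType)
  (c : P -> M) : sG G 0 -> M := fun g0 => c (p g0).

(* Every g1 in G_1 is congruent, modulo N_1G, to the degenerate element
   s_0(d_1 g1); hence d_0 g1 and d_1 g1 have the same class in pi_0(G), and the
   simplicial cocycle condition on an inflated cochain is the group cocycle
   condition.  Conversely, evaluating a simplicial cocycle c' at g1 = s_0 h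
   shows that c' is a crossed homomorphism on G_0, and evaluating it at
   g1 in N_1G, g0 = 1 shows that it vanishes on B_0NG; so c' is constant on the
   cosets of B_0NG and factors through pi_0(G).  Coboundaries m - <g> m are
   visibly inflated from pi_0(G). *)
From HB Require Import structures.
From mathcomp Require Import all_boot all_algebra.
From Stdlib Require Import FunctionalExtensionality ClassicalEpsilon.
Set Implicit Arguments. Unset Strict Implicit. Unset Printing Implicit Defensive.
Import GRing.Theory.
Local Open Scope ring_scope.

Lemma gmulrV (A : grp) (x : A) : gmul x (ginv x) = gone.
Proof.
rewrite -[gmul x _]gmul1 -{1}(gmulV (ginv x)) -gmulA (gmulA (ginv x) x) gmulV gmul1.
exact: gmulV.
Qed.

Lemma gmulr1 (A : grp) (x : A) : gmul x gone = x.
Proof. by rewrite -(gmulV x) gmulA gmulrV gmul1. Qed.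

Lemma gmulI (A : grp) (x : A) : injective (gmul x).
Proof. by move=> y z e; rewrite -(gmul1 y) -(gmul1 z) -(gmulV x) -!gmulA e. Qed.

Lemma hom1 (A B : grp) (f : A -> B) : is_hom f -> f gone = gone.
Proof. by move=> hf; apply: (@gmulI _ (f gone)); rewrite gmulr1 -hf gmul1. Qed.

Lemma homV (A B : grp) (f : A -> B) : is_hom f -> forall x, f (ginv x) = ginv (f x).
Proof. by move=> hf x; apply: (@gmulI _ (f x)); rewrite gmulrV -hf gmulrV hom1. Qed.

Lemma act0 (P : grp) (M : zmodType) (act : P -> M -> M) :
  is_module act -> forall x, act x 0 = 0.
Proof. by case=> _ _ actD x; apply: (@addrI _ (act x 0)); rewrite -actD !addr0. Qed.

Lemma factor_through_surj (A B C : Type) (p : A -> B) (f : A -> C) :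
  (forall b, exists a, p a = b) -> (forall a a', p a = p a' -> f a = f a') ->
  exists g : B -> C, (fun a => g (p a)) = f.
Proof.
move=> p_surj f_fibres.
exists (fun b => f (proj1_sig (constructive_indefinite_description _ (p_surj b)))).
apply: functional_extensionality => a; apply: f_fibres.
by case: constructive_indefinite_description.
Qed.

Section Inflation.

Variables (G : sgrp) (P : grp) (p : sG G 0 -> P) (M : zmodType) (act : P -> M -> M).

Lemma pi0_face01 : is_pi0 p -> forall g1 : sG G 1, p (face 0 g1) = p (face 1 g1).
Proof.
case=> p_hom _ p_ker g1.
have d0_hom : is_hom (@face G 0 0) by apply: face_hom.
have d1_hom : is_hom (@face G 0 1) by apply: face_hom.
set n := gmul g1 (ginv (degen 0 (face 1 g1))).
have n_cycle : face 1 n = gone by rewrite /n d1_hom homV // ds_eq1 // gmulrV.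
have : p (face 0 n) = gone by apply/p_ker; exists n.
rewrite /n d0_hom homV // ds_eq // p_hom homV // => /(f_equal (gmul^~ (p (face 1 g1)))).
by rewrite -gmulA gmulV gmulr1 gmul1.
Qed.

Lemma infl_inj : (forall x, exists g, p g = x) -> injective (@infl G P p M).
Proof.
move=> p_surj c c' e; apply: functional_extensionality => x.
by have [g <-] := p_surj x; exact: (f_equal (fun f => f g) e).
Qed.

Lemma infl_Z1 c : is_pi0 p -> grp_Z1 act c -> sgrp_Z1 p act (infl p c).
Proof.
move=> p_pi0 c_cocycle g1 g0; case: (p_pi0) => p_hom _ _.
by rewrite /sgrp_d1 /infl pi0_face01 // p_hom; exact: c_cocycle.
Qed.

Lemma infl_B1 c : grp_B1 act c -> sgrp_B1 p act (infl p c).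
Proof. by move=> [m c_m]; exists m => g0; rewrite /infl c_m. Qed.

Lemma infl_B1_reflect c :
  (forall x, exists g, p g = x) -> sgrp_B1 p act (infl p c) -> grp_B1 act c.
Proof. by move=> p_surj [m c_m]; exists m => x; have [g <-] := p_surj x; exact: c_m. Qed.

Lemma sgrp_B1_infl_surj c' :
  sgrp_B1 p act c' -> exists c, grp_B1 act c /\ infl p c = c'.
Proof.
move=> [m c'_m]; exists (fun x => m - act x m); split; first by exists m.
by apply: functional_extensionality => g; rewrite /infl c'_m.
Qed.

Section SimplicialCocycle.

Variable c' : sG G 0 -> M.
Hypothesis c'_cocycle : sgrp_Z1 p act c'.

Lemma sgrp_Z1_mul h g0 : c' (gmul h g0) = c' h + act (p h) (c' g0).
Proof.
have := c'_cocycle (degen 0 h) g0.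
by rewrite /sgrp_d1 ds_eq // ds_eq1 // => /eqP; rewrite addrAC subr_eq0 => /eqP.
Qed.

Lemma sgrp_Z1_B0NG b : is_hom p -> is_module act -> B0NG b -> c' b = 0.
Proof.
move=> p_hom [act1 _ _] [n [n1 n0]]; have := c'_cocycle n gone.
by rewrite /sgrp_d1 n1 n0 gmul1 hom1 // act1 subrK.
Qed.

Lemma sgrp_Z1_fibres :
  is_pi0 p -> is_module act -> forall g g', p g = p g' -> c' g = c' g'.
Proof.
move=> [p_hom _ p_ker] act_module g g' e.
have -> : g' = gmul g (gmul (ginv g) g') by rewrite gmulA gmulrV gmul1.
have b_B0NG : B0NG (gmul (ginv g) g') by apply/p_ker; rewrite p_hom homV // e gmulV.
by rewrite sgrp_Z1_mul (sgrp_Z1_B0NG p_hom act_module b_B0NG) act0 // addr0.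
Qed.

End SimplicialCocycle.

Lemma infl_Z1_reflect c :
  is_hom p -> (forall x, exists g, p g = x) -> sgrp_Z1 p act (infl p c) -> grp_Z1 act c.
Proof.
move=> p_hom p_surj c_cocycle h g.
have [h0 <-] := p_surj h; have [g0 <-] := p_surj g.
rewrite /grp_d1 -p_hom -![c (p _)]/(infl p c _) sgrp_Z1_mul //.
by rewrite opprD addrA subrr add0r addNr.
Qed.

Lemma sgrp_Z1_infl_surj c' : is_pi0 p -> is_module act ->
  sgrp_Z1 p act c' -> exists c, grp_Z1 act c /\ infl p c = c'.
Proof.
move=> p_pi0 act_module c'_cocycle; case: (p_pi0) => p_hom p_surj _.
have [c c_infl] := factor_through_surj p_surj (sgrp_Z1_fibres c'_cocycle p_pi0 act_module).
exists c; split=> //; apply: infl_Z1_reflect => //.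
by rewrite /infl c_infl.
Qed.

End Inflation.

Theorem proposition3p5 (G : sgrp) (P : grp) (p : sG G 0 -> P)
  (M : zmodType) (act : P -> M -> M) :
  is_pi0 p -> is_module act ->
  (* the map is additive (a homomorphism of abelian groups) *)
  (forall c1 c2 : P -> M, infl p (fun x => c1 x + c2 x) =
      (fun g => infl p c1 g + infl p c2 g)) /\
  (* restriction to Z^1 is an isomorphism Z^1(pi_0 G, M) -> Z^1(G, M) *)
  (forall c, grp_Z1 act c -> sgrp_Z1 p act (infl p c)) /\
  (forall c c', grp_Z1 act c -> grp_Z1 act c' -> infl p c = infl p c' -> c = c') /\
  (forall c', sgrp_Z1 p act c' -> exists c, grp_Z1 act c /\ infl p c = c') /\
  (* restriction to B^1 is an isomorphism B^1(pi_0 G, M) -> B^1(G, M) *)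
  (forall c, grp_B1 act c -> sgrp_B1 p act (infl p c)) /\
  (forall c', sgrp_B1 p act c' -> exists c, grp_B1 act c /\ infl p c = c') /\
  (* hence H^1(G, M) ~ H^1(pi_0 G, M): a cocycle is a coboundary iff its image is *)
  (forall c, grp_Z1 act c -> (sgrp_B1 p act (infl p c) <-> grp_B1 act c)).
Proof.
move=> p_pi0 act_module; have [_ p_surj _] := p_pi0.
split; first by [].
split; first by move=> c; exact: infl_Z1.
split; first by move=> c c' _ _; exact: infl_inj.
split; first by move=> c'; exact: sgrp_Z1_infl_surj.
split; first exact: infl_B1.
split; first exact: sgrp_B1_infl_surj.
by move=> c _; split; [exact: infl_B1_reflect | exact: infl_B1].
Qed.
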